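(* Let $A\ge\chi^2\rho^2$ and $\Delta t>0$. Let $(\phi^k)_{k\ge0}\subset\mathcal{C}_{\rm per}$ be grid functions with $0<\phi^k_{i,j}<1/\rho$ for all $k,i,j$, such that $\phi^1=\phi^0$ and, for every $k\ge1$, $\phi^{k+1}$ together with some $\mu^{k+1}\in\mathcal{C}_{\rm per}$ satisfies $$\frac{3\phi^{k+1}-4\phi^k+\phi^{k-1}}{2\Delta t}=\Delta_h\mu^{k+1},$$ $$\mu^{k+1}=S'(\phi^{k+1})+\kappa'(\phi^{k+1})\big(a_x((D_x\phi^{k+1})^2)+a_y((D_y\phi^{k+1})^2)\big)-2d_x(A_x\kappa(\phi^{k+1})D_x\phi^{k+1})-2d_y(A_y\kappa(\phi^{k+1})D_y\phi^{k+1})+H'(2\phi^k-\phi^{k-1})-A\Delta t\,\Delta_h(\phi^{k+1}-\phi^k).$$ For $n\ge1$ define the modified discrete energy $$E_h(\phi^{n+1},\phi^n):=F(\phi^{n+1})+\frac{1}{4\Delta t}\|\phi^{n+1}-\phi^n\|_{-1,h}^2+\chi\rho\|\phi^{n+1}-\phi^n\|_2^2.$$ Then for every $n\ge1$, $$E_h(\phi^{n+1},\phi^n)+\Delta t\Big(1-\frac{\chi^2\rho^2}{A}\Big)\Big\|\frac{\phi^{n+1}-\phi^n}{\Delta t}\Big\|_{-1,h}^2\le E_h(\phi^n,\phi^{n-1}).$$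
   Context: Parameters: $N_1,N_2,\chi>0$, $\alpha=\pi(\sqrt{N_2/\pi}+N_1/2)^2$, $\beta=\alpha/\sqrt{\pi N_2}$, $\tau=\sqrt{\pi N_2}N_1$, $\rho=1+N_2/\tau$. $S(\phi)=\frac{\phi}{\tau}\ln\frac{\alpha\phi}{\tau}+\frac{\phi}{N_1}\ln\frac{\beta\phi}{\tau}+(1-\rho\phi)\ln(1-\rho\phi)$, $S'(\phi)=(\frac1\tau+\frac1{N_1})\ln\phi-\rho\ln(1-\rho\phi)$ (additive constants omitted), $H(\phi)=\chi\phi(1-\rho\phi)$, $H'(\phi)=-2\chi\rho\phi$, $\kappa(\phi)=\frac1{36\phi(1-\phi)}$, $\kappa'(\phi)=\frac{2\phi-1}{36\phi^2(1-\phi)^2}$. Grid: $\Omega=(0,L)^2$, $h=L/N$, $\mathcal{C}_{\rm per}$ = $N$-periodic cell-centered grid functions. $D_x\nu_{i+1/2,j}=(\nu_{i+1,j}-\nu_{i,j})/h$, $A_x\nu_{i+1/2,j}=(\nu_{i+1,j}+\nu_{i,j})/2$; for edge functions $a_xf_{i,j}=(f_{i+1/2,j}+f_{i-1/2,j})/2$, $d_xf_{i,j}=(f_{i+1/2,j}-f_{i-1/2,j})/h$; analogously in $y$; $\Delta_h=d_xD_x+d_yD_y$. Inner product $(\nu,\xi)=h^2\sum_{i,j=1}^N\nu_{i,j}\xi_{i,j}$, $\|\nu\|_2^2=(\nu,\nu)$. For $\nu$ with zero mean, $\|\nu\|_{-1,h}^2=(\nu,(-\Delta_h)^{-1}\nu)$,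 with $(-\Delta_h)^{-1}\nu$ the unique zero-mean solution $\psi$ of $-\Delta_h\psi=\nu$. Discrete energy $F(\phi)=h^2\sum_{i,j=1}^N\big(S(\phi_{i,j})+H(\phi_{i,j})+\kappa(\phi_{i,j})(a_x((D_x\phi)^2)_{i,j}+a_y((D_y\phi)^2)_{i,j})\big)$. (The scheme conserves mass, so $\phi^{n+1}-\phi^n$ has zero mean.) *)

From HB Require Import structures.
From mathcomp Require Import all_boot all_order all_algebra.
From mathcomp Require Import all_classical all_reals.
From mathcomp Require Import exp trigo.
From Stdlib Require Import ClassicalEpsilon.
Set Implicit Arguments. Unset Strict Implicit. Unset Printing Implicit Defensive.
Import Order.TTheory GRing.Theory Num.Theory.
Local Open Scope ring_scope.

Section Grid.
Variable R : realType.

(* N-periodic cell-centered grid functions on (0,L)^2: values at cells (i,j),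
   i,j in 'I_N (0-based); periodicity via cyclic successor/predecessor. *)
Definition grid (N : nat) := 'I_N -> 'I_N -> R.

Variables (N : nat) (L : R).
Definition hh : R := L / N%:R.

(* Edge functions: value at edge (i+1/2, j) stored at index (i, j) (x-edges),
   value at edge (i, j+1/2) stored at index (i, j) (y-edges). *)
Definition Dx (v : grid N) : grid N := fun i j => (v (ordS i) j - v i j) / hh.
Definition Dy (v : grid N) : grid N := fun i j => (v i (ordS j) - v i j) / hh.
Definition Ax (v : grid N) : grid N := fun i j => (v (ordS i) j + v i j) / 2.
Definition Ay (v : grid N) : grid N := fun i j => (v i (ordS j) + v i j) / 2.
Definition ax (f : grid N) : grid N := fun i j => (f i j + f (ord_pred i) j) / 2.
Definition ay (f : grid N) : grid N := fun i j => (f i j + f i (ord_pred j)) / 2.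
Definition dx (f : grid N) : grid N := fun i j => (f i j - f (ord_pred i) j) / hh.
Definition dy (f : grid N) : grid N := fun i j => (f i j - f i (ord_pred j)) / hh.
Definition lap (v : grid N) : grid N := fun i j => dx (Dx v) i j + dy (Dy v) i j.

Definition ip (u v : grid N) : R := hh ^+ 2 * \sum_(i < N) \sum_(j < N) u i j * v i j.
Definition norm2sq (v : grid N) : R := ip v v.

Definition inv_neg_lap (v : grid N) : grid N :=
  epsilon (inhabits (fun _ _ => 0))
    (fun psi : grid N => (forall i j, - lap psi i j = v i j) /\
                         \sum_(i < N) \sum_(j < N) psi i j = 0).
Definition normm1sq (v : grid N) : R := ip v (inv_neg_lap v).

Variables (N1 N2 chi : R).
Definition alpha : R := pi * (Num.sqrt (N2 / pi) + N1 / 2) ^+ 2.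
Definition beta : R := alpha / Num.sqrt (pi * N2).
Definition tau : R := Num.sqrt (pi * N2) * N1.
Definition rho : R := 1 + N2 / tau.

Definition Sf (x : R) : R :=
  x / tau * ln (alpha * x / tau) + x / N1 * ln (beta * x / tau)
  + (1 - rho * x) * ln (1 - rho * x).
(* S' with additive constants omitted, as in the paper *)
Definition Sp (x : R) : R := (tau^-1 + N1^-1) * ln x - rho * ln (1 - rho * x).
Definition Hf (x : R) : R := chi * x * (1 - rho * x).
Definition Hp (x : R) : R := - (2 * chi * rho * x).
Definition kap (x : R) : R := (36 * x * (1 - x))^-1.
Definition kapp (x : R) : R := (2 * x - 1) / (36 * x ^+ 2 * (1 - x) ^+ 2).

Definition gradsq (v : grid N) : grid N :=
  fun i j => ax (fun a b => Dx v a b ^+ 2) i j + ay (fun a b => Dy v a b ^+ 2) i j.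

Definition Fenergy (v : grid N) : R :=
  hh ^+ 2 * \sum_(i < N) \sum_(j < N)
    (Sf (v i j) + Hf (v i j) + kap (v i j) * gradsq v i j).

(* chemical potential mu^{k+1} given phi^{k+1} = p1, phi^k = p0, phi^{k-1} = pm *)
Definition chempot (A dt : R) (p1 p0 pm : grid N) : grid N :=
  fun i j =>
    Sp (p1 i j) + kapp (p1 i j) * gradsq p1 i j
    - 2 * dx (fun a b => Ax (fun c d => kap (p1 c d)) a b * Dx p1 a b) i j
    - 2 * dy (fun a b => Ay (fun c d => kap (p1 c d)) a b * Dy p1 a b) i j
    + Hp (2 * p0 i j - pm i j)
    - A * dt * lap (fun a b => p1 a b - p0 a b) i j.

Definition Eh (dt : R) (p1 p0 : grid N) : R :=
  Fenergy p1 + (4 * dt)^-1 * normm1sq (fun i j => p1 i j - p0 i j)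
  + chi * rho * norm2sq (fun i j => p1 i j - p0 i j).

End Grid.

(* The BDF2 step is a convex-concave splitting.  The entropy part of S and the
   gradient energy kap(phi) |grad phi|^2 are convex (the latter jointly in
   (phi, grad phi)), so their increments are bounded by tangents at phi^{n+1};
   after summation by parts these tangents are exactly the implicit part of
   mu^{n+1}.  The concave part H, evaluated at the extrapolation
   2 phi^n - phi^{n-1}, costs chi rho |phi^{n+1} - phi^n|^2 terms.  Testing the
   scheme against (-Delta_h)^{-1}(phi^{n+1} - phi^n) turns the BDF2 difference
   into the H^{-1} terms of E_h, and the remaining chi rho ||phi^{n+1} - phi^n||^2
   is absorbed by the stabilization A dt ||grad(phi^{n+1} - phi^n)||^2 through
   ||d||^2 = (grad d, grad (-Delta_h)^{-1} d) and Young's inequality; this is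
   where A >= chi^2 rho^2 enters. *)

From HB Require Import structures.
From mathcomp Require Import all_boot all_order all_algebra.
From mathcomp Require Import all_classical all_reals.
From mathcomp Require Import exp trigo.
From mathcomp Require Import ring lra.
From Stdlib Require Import ClassicalEpsilon.
Set Implicit Arguments. Unset Strict Implicit. Unset Printing Implicit Defensive.
Import Order.TTheory GRing.Theory Num.Theory.
Local Open Scope ring_scope.

Section ScalarInequalities.
Variable R : realType.

Lemma young_sqr_le (a x y : R) : 0 < a -> 2 * x * y <= a * x ^+ 2 + a^-1 * y ^+ 2.
Proof.
move=> a0; rewrite -subr_ge0.
have -> : a * x ^+ 2 + a^-1 * y ^+ 2 - 2 * x * y = a^-1 * (a * x - y) ^+ 2.
  by field; rewrite gt_eqF.
by rewrite mulr_ge0 ?sqr_ge0 // invr_ge0 ltW.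
Qed.

Lemma xlnx_tangent_le (a b : R) : 0 < a -> 0 < b ->
  a * ln a - b * ln b <= (ln a + 1) * (a - b).
Proof.
move=> a0 b0.
have : ln (a / b) <= a / b - 1.
  by rewrite -[X in ln X](subrKC 1) le_ln1Dx // ltrBrDl subrr divr_gt0.
rewrite ln_div ?posrE // -(ler_pM2l b0).
have -> : b * (a / b - 1) = a - b by field; rewrite gt_eqF.
lra.
Qed.

(* The tangent gap is an explicit sum of squares: kap x * y ^+ 2 is jointly
   convex on (0,1) x R. *)
Lemma kap_sq_tangent_le (x x' y y' : R) : 0 < x < 1 -> 0 < x' < 1 ->
  kap x * y ^+ 2 - kap x' * y' ^+ 2
  <= kapp x * y ^+ 2 * (x - x') + 2 * kap x * y * (y - y').
Proof.
move=> /andP[x0 x1] /andP[x'0 x'1].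
have x1' : 0 < 1 - x by rewrite subr_gt0.
have x'1' : 0 < 1 - x' by rewrite subr_gt0.
rewrite -subr_ge0.
have -> : kapp x * y ^+ 2 * (x - x') + 2 * kap x * y * (y - y')
          - (kap x * y ^+ 2 - kap x' * y' ^+ 2)
  = 36^-1 * (x'^-1 * (y' - y * x' / x) ^+ 2
             + (1 - x')^-1 * (y' - y * (1 - x') / (1 - x)) ^+ 2).
  by rewrite /kap /kapp; field; rewrite !gt_eqF.
have ix' : 0 <= x'^-1 by rewrite invr_ge0 ltW.
have ix'1 : 0 <= (1 - x')^-1 by rewrite invr_ge0 ltW.
by rewrite mulr_ge0 ?invr_ge0 // addr_ge0 // mulr_ge0 // sqr_ge0.
Qed.

End ScalarInequalities.

Section FloryHuggins.
Variables (R : realType) (N1 N2 : R).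
Hypotheses (N1_gt0 : 0 < N1) (N2_gt0 : 0 < N2).
Local Notation tau := (tau N1 N2).
Local Notation rho := (rho N1 N2).

Lemma tau_gt0 : 0 < tau.
Proof. by rewrite /tau mulr_gt0 // sqrtr_gt0 mulr_gt0 // pi_gt0. Qed.

Lemma rho_gt1 : 1 < rho.
Proof. by rewrite /rho ltrDl divr_gt0 // tau_gt0. Qed.

Lemma rho_gt0 : 0 < rho.
Proof. exact: lt_trans ltr01 rho_gt1. Qed.

Lemma lt_inv_rho1 (x : R) : 0 < x < rho^-1 -> 0 < x < 1.
Proof.
case/andP=> -> /lt_trans; apply.
by rewrite invf_lt1 ?rho_gt1 ?rho_gt0.
Qed.

(* The additive constant dropped from S' in [Sp]; it never matters because the
   scheme conserves mass. *)
Definition Sp_offset : R :=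
  (ln (alpha N1 N2 / tau) + 1) / tau + (ln (beta N1 N2 / tau) + 1) / N1 - rho.

Lemma Sf_tangent_le (a b : R) : 0 < a < rho^-1 -> 0 < b < rho^-1 ->
  Sf N1 N2 a - Sf N1 N2 b <= (Sp N1 N2 a + Sp_offset) * (a - b).
Proof.
have one_sub_rho_gt0 (x : R) : 0 < x < rho^-1 -> 0 < 1 - rho * x.
  case/andP=> _ x1; rewrite subr_gt0 -(mulfV (lt0r_neq0 rho_gt0)).
  by rewrite ltr_pM2l // rho_gt0.
move=> ab bb; have ua := one_sub_rho_gt0 _ ab; have ub := one_sub_rho_gt0 _ bb.
case/andP: ab => a0 _; case/andP: bb => b0 _.
have t0 := tau_gt0.
have alpha_gt0 : 0 < alpha N1 N2.
  by rewrite /alpha mulr_gt0 ?pi_gt0 // exprn_gt0 // ltr_wpDl ?sqrtr_ge0 // divr_gt0.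
have beta_gt0 : 0 < beta N1 N2.
  by rewrite /beta divr_gt0 // sqrtr_gt0 mulr_gt0 // pi_gt0.
have lnMl (k x : R) : 0 < k -> 0 < x -> ln (k * x / tau) = ln (k / tau) + ln x.
  by move=> k0 x0; rewrite mulrAC [LHS]lnM // posrE divr_gt0.
rewrite /Sf !(lnMl (alpha N1 N2)) // !(lnMl (beta N1 N2)) // /Sp /Sp_offset.
have it : 0 <= tau^-1 by rewrite invr_ge0 ltW.
have iN1 : 0 <= N1^-1 by rewrite invr_ge0 ltW.
have Ta := ler_wpM2l it (xlnx_tangent_le a0 b0).
have Tb := ler_wpM2l iN1 (xlnx_tangent_le a0 b0).
have Tu := xlnx_tangent_le ua ub.
lra.
Qed.

Lemma bulk_energy_split_le (chi a b c : R) : 0 < a < rho^-1 -> 0 < b < rho^-1 ->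
  Sf N1 N2 a + Hf N1 N2 chi a - (Sf N1 N2 b + Hf N1 N2 chi b)
  <= (Sp N1 N2 a + Sp_offset + chi + Hp N1 N2 chi (2 * b - c)) * (a - b)
     - chi * rho * (a - b) ^+ 2 + 2 * chi * rho * (b - c) * (a - b).
Proof.
move=> ab bb; have := Sf_tangent_le ab bb.
have : Hf N1 N2 chi a - Hf N1 N2 chi b = (chi + Hp N1 N2 chi (2 * b - c)) * (a - b)
    - chi * rho * (a - b) ^+ 2 + 2 * chi * rho * (b - c) * (a - b).
  by rewrite /Hf /Hp; ring.
lra.
Qed.

End FloryHuggins.

Section GridCalculus.
Variables (R : realType) (N : nat) (L : R).
Local Notation G := (grid R N).
Local Notation h := (hh N L).
Local Notation Dx := (Dx L).
Local Notation Dy := (Dy L).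
Local Notation dx := (dx L).
Local Notation dy := (dy L).
Local Notation lap := (lap L).
Local Notation ip := (ip L).

Definition gsum (f : G) : R := \sum_(i < N) \sum_(j < N) f i j.

Lemma eq_gsum (f g : G) : (forall i j, f i j = g i j) -> gsum f = gsum g.
Proof. by move=> fg; apply: eq_bigr => i _; apply: eq_bigr => j _. Qed.

Lemma gsumD (f g : G) : gsum (fun i j => f i j + g i j) = gsum f + gsum g.
Proof. by rewrite /gsum -big_split; apply: eq_bigr => i _; rewrite big_split. Qed.

Lemma gsumZ c (f : G) : gsum (fun i j => c * f i j) = c * gsum f.
Proof. by rewrite /gsum mulr_sumr; apply: eq_bigr => i _; rewrite mulr_sumr. Qed.

Lemma gsumN (f : G) : gsum (fun i j => - f i j) = - gsum f.
Proof. by rewrite -mulN1r -gsumZ; apply: eq_gsum => i j; rewrite mulN1r. Qed.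

Lemma gsumB (f g : G) : gsum (fun i j => f i j - g i j) = gsum f - gsum g.
Proof. by rewrite gsumD gsumN. Qed.

Lemma gsum_cst c : gsum (fun _ _ => c) = c * N%:R * N%:R.
Proof.
rewrite /gsum; under eq_bigr do rewrite sumr_const card_ord.
by rewrite sumr_const card_ord !mulr_natr.
Qed.

Lemma ler_gsum (f g : G) : (forall i j, f i j <= g i j) -> gsum f <= gsum g.
Proof. by move=> fg; apply: ler_sum => i _; apply: ler_sum => j _. Qed.

Lemma gsum_ord_predx (f : G) : gsum (fun i j => f (ord_pred i) j) = gsum f.
Proof. by rewrite /gsum [RHS](reindex_inj (@ord_pred_inj N)). Qed.

Lemma gsum_ord_predy (f : G) : gsum (fun i j => f i (ord_pred j)) = gsum f.
Proof. by apply: eq_bigr => i _; rewrite [RHS](reindex_inj (@ord_pred_inj N)). Qed.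

Lemma gsum_dxMl (f g : G) :
  gsum (fun i j => dx f i j * g i j) = - gsum (fun i j => f i j * Dx g i j).
Proof.
have -> : gsum (fun i j => dx f i j * g i j)
  = gsum (fun i j => f i j * g i j / h) - gsum (fun i j => f (ord_pred i) j * g i j / h).
  by rewrite -gsumB; apply: eq_gsum => i j; rewrite /dx; ring.
have -> : gsum (fun i j => f (ord_pred i) j * g i j / h)
          = gsum (fun i j => f i j * g (ordS i) j / h).
  by rewrite -[RHS]gsum_ord_predx; apply: eq_gsum => i j; rewrite ord_predK.
by rewrite -gsumB -gsumN; apply: eq_gsum => i j; rewrite /Dx; ring.
Qed.

Lemma gsum_dyMl (f g : G) :
  gsum (fun i j => dy f i j * g i j) = - gsum (fun i j => f i j * Dy g i j).
Proof.
have -> : gsum (fun i j => dy f i j * g i j)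
  = gsum (fun i j => f i j * g i j / h) - gsum (fun i j => f i (ord_pred j) * g i j / h).
  by rewrite -gsumB; apply: eq_gsum => i j; rewrite /dy; ring.
have -> : gsum (fun i j => f i (ord_pred j) * g i j / h)
          = gsum (fun i j => f i j * g i (ordS j) / h).
  by rewrite -[RHS]gsum_ord_predy; apply: eq_gsum => i j; rewrite ord_predK.
by rewrite -gsumB -gsumN; apply: eq_gsum => i j; rewrite /Dy; ring.
Qed.

Lemma lap_lincomb a b (f g : G) i j :
  lap (fun x y => a * f x y + b * g x y) i j = a * lap f i j + b * lap g i j.
Proof. by rewrite /lap /dx /dy /Dx /Dy; ring. Qed.

Lemma lap_subr_cst c (f : G) i j : lap (fun x y => f x y - c) i j = lap f i j.
Proof. by rewrite /lap /dx /dy /Dx /Dy; ring. Qed.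

Lemma lap_divr c (f : G) i j : lap (fun x y => f x y / c) i j = lap f i j / c.
Proof. by rewrite /lap /dx /dy /Dx /Dy; ring. Qed.

Lemma ipE (f g : G) : ip f g = h ^+ 2 * gsum (fun i j => f i j * g i j).
Proof. by []. Qed.

Lemma ip_sym (f g : G) : ip f g = ip g f.
Proof. by rewrite !ipE; congr (_ * _); apply: eq_gsum => i j; rewrite mulrC. Qed.

Lemma ip_lincomb a b (f g k : G) :
  ip (fun i j => a * f i j + b * g i j) k = a * ip f k + b * ip g k.
Proof.
rewrite !ipE [a * _]mulrCA [b * _]mulrCA -mulrDr; congr (_ * _).
by rewrite -!gsumZ -gsumD; apply: eq_gsum => i j; ring.
Qed.

Lemma ip_ge0 (f : G) : 0 <= ip f f.
Proof.
rewrite ipE mulr_ge0 ?sqr_ge0 //.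
by apply: sumr_ge0 => i _; apply: sumr_ge0 => j _; rewrite -expr2 sqr_ge0.
Qed.

Lemma ip_young a (f g : G) : 0 < a -> 2 * ip f g <= a * ip f f + a^-1 * ip g g.
Proof.
move=> a0; rewrite !ipE mulrCA [a * _]mulrCA [a^-1 * _]mulrCA -mulrDr ler_wpM2l ?sqr_ge0 //.
rewrite -!gsumZ -gsumD; apply: ler_gsum => i j.
by rewrite mulrA -!expr2; apply: young_sqr_le.
Qed.

Definition dirichlet (f g : G) : R := ip (Dx f) (Dx g) + ip (Dy f) (Dy g).

Lemma dirichlet_sym (f g : G) : dirichlet f g = dirichlet g f.
Proof. by rewrite /dirichlet ip_sym [ip (Dy f) _]ip_sym. Qed.

Lemma dirichlet_ge0 (f : G) : 0 <= dirichlet f f.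
Proof. by rewrite addr_ge0 ?ip_ge0. Qed.

Lemma dirichlet_young a (f g : G) : 0 < a ->
  2 * dirichlet f g <= a * dirichlet f f + a^-1 * dirichlet g g.
Proof.
move=> a0; have := ip_young (Dx f) (Dx g) a0; have := ip_young (Dy f) (Dy g) a0.
rewrite /dirichlet; lra.
Qed.

Lemma ip_neg_lap (f g : G) : ip (fun i j => - lap f i j) g = dirichlet f g.
Proof.
rewrite /dirichlet !ipE -mulrDr; congr (_ * _).
rewrite -[LHS]opprK -gsumN.
have -> : gsum (fun i j => - (- lap f i j * g i j))
  = gsum (fun i j => dx (Dx f) i j * g i j) + gsum (fun i j => dy (Dy f) i j * g i j).
  by rewrite -gsumD; apply: eq_gsum => i j; rewrite /lap; ring.
by rewrite gsum_dxMl gsum_dyMl opprD !opprK.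
Qed.

Lemma gsum_lap (f : G) : gsum (lap f) = 0.
Proof.
have -> : gsum (lap f)
  = gsum (fun i j => dx (Dx f) i j * 1) + gsum (fun i j => dy (Dy f) i j * 1).
  by rewrite -gsumD; apply: eq_gsum => i j; rewrite /lap !mulr1.
have gsum0 : gsum (fun _ _ => 0) = 0 by rewrite gsum_cst !mul0r.
rewrite gsum_dxMl gsum_dyMl -opprD -gsumD -oppr0 -gsum0.
by congr (- _); apply: eq_gsum => i j; rewrite /Dx /Dy !subrr !mul0r !mulr0 addr0.
Qed.

Lemma ip_dirichlet (psi v g : G) :
  (forall i j, - lap psi i j = v i j) -> ip v g = dirichlet psi g.
Proof.
move=> psiv; rewrite -ip_neg_lap; congr ip.
by apply/funext => i; apply/funext => j; rewrite psiv.
Qed.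

Lemma ip_young_neg_lap a (psi d : G) : 0 < a -> (forall i j, - lap psi i j = d i j) ->
  2 * ip d d <= a * dirichlet d d + a^-1 * dirichlet psi psi.
Proof.
by move=> a0 psid; rewrite (ip_dirichlet _ psid) dirichlet_sym; apply: dirichlet_young.
Qed.

Lemma ip_bdf2_potential dt (p1 p0 pm mu psi psi' : G) : dt != 0 ->
  (forall i j, - lap psi i j = p1 i j - p0 i j) ->
  (forall i j, - lap psi' i j = p0 i j - pm i j) ->
  (forall i j, (3 * p1 i j - 4 * p0 i j + pm i j) / (2 * dt) = lap mu i j) ->
  ip mu (fun i j => p1 i j - p0 i j)
  = (dirichlet psi' psi - 3 * dirichlet psi psi) / (2 * dt).
Proof.
move=> dt_neq0 psiE psi'E muE.
rewrite ip_sym (ip_dirichlet _ psiE) dirichlet_sym -ip_neg_lap.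
have -> : (fun i j => - lap mu i j) = (fun i j =>
    (-3 / (2 * dt)) * (p1 i j - p0 i j) + (2 * dt)^-1 * (p0 i j - pm i j)).
  by apply/funext => i; apply/funext => j; rewrite -muE; field.
by rewrite ip_lincomb (ip_dirichlet _ psiE) (ip_dirichlet _ psi'E); field.
Qed.

Hypothesis N_gt0 : (0 < N)%N.

Lemma neg_lap_inv_neg_lap (psi v : G) : (forall i j, - lap psi i j = v i j) ->
  forall i j, - lap (inv_neg_lap L v) i j = v i j.
Proof.
move=> psiv; pose m := gsum psi / (N%:R * N%:R).
have N2_neq0 : N%:R * N%:R != 0 :> R by rewrite mulf_neq0 // pnatr_eq0 -lt0n.
have : exists p : G, (forall i j, - lap p i j = v i j) /\ gsum p = 0.
  exists (fun i j => psi i j - m); split => [i j|]; first by rewrite lap_subr_cst.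
  by rewrite gsumB gsum_cst -mulrA /m divfK // subrr.
by move/(epsilon_spec (inhabits (fun _ _ => 0))) => [].
Qed.

Lemma normm1sq_ip (psi v : G) : (forall i j, - lap psi i j = v i j) ->
  normm1sq L v = ip v psi.
Proof.
move=> psiv; rewrite /normm1sq (ip_dirichlet _ psiv) dirichlet_sym.
by rewrite -(ip_dirichlet _ (neg_lap_inv_neg_lap psiv)).
Qed.

Lemma normm1sq_dirichlet (psi v : G) : (forall i j, - lap psi i j = v i j) ->
  normm1sq L v = dirichlet psi psi.
Proof. by move=> psiv; rewrite (normm1sq_ip psiv) (ip_dirichlet _ psiv). Qed.

Lemma normm1sq_divr c (psi v : G) : (forall i j, - lap psi i j = v i j) ->
  normm1sq L (fun i j => v i j / c) = normm1sq L v / c ^+ 2.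
Proof.
move=> psiv; have psivc i j : - lap (fun x y => psi x y / c) i j = v i j / c.
  by rewrite lap_divr -psiv mulNr.
rewrite (normm1sq_ip psivc) (normm1sq_ip psiv) !ipE -mulrA; congr (_ * _).
by rewrite mulrC -gsumZ; apply: eq_gsum => i j; rewrite expr2 invfM; ring.
Qed.

End GridCalculus.

Section EnergyEstimate.
Variables (R : realType) (N : nat) (L : R).
Local Notation G := (grid R N).
Local Notation Dx := (Dx L).
Local Notation Dy := (Dy L).
Local Notation dx := (dx L).
Local Notation dy := (dy L).
Local Notation gradsq := (gradsq L).

Lemma gradient_energy_tangent_le (p1 p0 : G) :
  (forall i j, 0 < p1 i j < 1) -> (forall i j, 0 < p0 i j < 1) ->
  gsum (fun i j => kap (p1 i j) * gradsq p1 i j)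
  - gsum (fun i j => kap (p0 i j) * gradsq p0 i j)
  <= gsum (fun i j => (kapp (p1 i j) * gradsq p1 i j
        - 2 * dx (fun a b => Ax (fun c e => kap (p1 c e)) a b * Dx p1 a b) i j
        - 2 * dy (fun a b => Ay (fun c e => kap (p1 c e)) a b * Dy p1 a b) i j)
        * (p1 i j - p0 i j)).
Proof.
move=> p1b p0b.
set Fx := fun a b => _ * Dx p1 a b; set Fy := fun a b => _ * Dy p1 a b.
set d := fun i j => p1 i j - p0 i j.
pose Tx i j := Dx p1 i j * Dx d i j; pose Ty i j := Dy p1 i j * Dy d i j.
have Dxd i j : Dx d i j = Dx p1 i j - Dx p0 i j by rewrite /Dx /d; ring.
have Dyd i j : Dy d i j = Dy p1 i j - Dy p0 i j by rewrite /Dy /d; ring.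
have pointwise i j : kap (p1 i j) * gradsq p1 i j - kap (p0 i j) * gradsq p0 i j
  <= kapp (p1 i j) * gradsq p1 i j * d i j + kap (p1 i j) * (Tx i j + Tx (ord_pred i) j
       + Ty i j + Ty i (ord_pred j)).
  have K (y y' : R) := kap_sq_tangent_le y y' (p1b i j) (p0b i j).
  have := K (Dx p1 i j) (Dx p0 i j); have := K (Dy p1 i j) (Dy p0 i j).
  have := K (Dx p1 (ord_pred i) j) (Dx p0 (ord_pred i) j).
  have := K (Dy p1 i (ord_pred j)) (Dy p0 i (ord_pred j)).
  rewrite /gradsq /ax /ay /Tx /Ty !Dxd !Dyd /d; lra.
have shiftx : gsum (fun i j => kap (p1 i j) * Tx (ord_pred i) j)
            = gsum (fun i j => kap (p1 (ordS i) j) * Tx i j).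
  by rewrite -[RHS]gsum_ord_predx; apply: eq_gsum => i j; rewrite ord_predK.
have shifty : gsum (fun i j => kap (p1 i j) * Ty i (ord_pred j))
            = gsum (fun i j => kap (p1 i (ordS j)) * Ty i j).
  by rewrite -[RHS]gsum_ord_predy; apply: eq_gsum => i j; rewrite ord_predK.
have partsx : 2 * gsum (fun i j => dx Fx i j * d i j)
  = - (gsum (fun i j => kap (p1 i j) * Tx i j) + gsum (fun i j => kap (p1 (ordS i) j) * Tx i j)).
  rewrite gsum_dxMl mulrN -gsumZ -gsumD; congr (- _).
  by apply: eq_gsum => i j; rewrite /Fx /Ax /Tx; field.
have partsy : 2 * gsum (fun i j => dy Fy i j * d i j)
  = - (gsum (fun i j => kap (p1 i j) * Ty i j) + gsum (fun i j => kap (p1 i (ordS j)) * Ty i j)).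
  rewrite gsum_dyMl mulrN -gsumZ -gsumD; congr (- _).
  by apply: eq_gsum => i j; rewrite /Fy /Ay /Ty; field.
rewrite -gsumB; apply: le_trans (ler_gsum pointwise) _; rewrite le_eqVlt; apply/orP; left.
have -> : gsum (fun i j => (kapp (p1 i j) * gradsq p1 i j - 2 * dx Fx i j - 2 * dy Fy i j) * d i j)
  = gsum (fun i j => kapp (p1 i j) * gradsq p1 i j * d i j)
    - 2 * gsum (fun i j => dx Fx i j * d i j) - 2 * gsum (fun i j => dy Fy i j * d i j).
  by rewrite -!gsumZ -!gsumB; apply: eq_gsum => i j; ring.
rewrite partsx partsy -shiftx -shifty !opprK -!gsumD.
by apply/eqP/eq_gsum => i j; ring.
Qed.

Lemma free_energy_step_le (N1 N2 chi A dt : R) (p1 p0 pm mu : G) :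
  0 < N1 -> 0 < N2 ->
  (forall i j, 0 < p1 i j < (rho N1 N2)^-1) -> (forall i j, 0 < p0 i j < (rho N1 N2)^-1) ->
  gsum (fun i j => p1 i j - p0 i j) = 0 ->
  (forall i j, mu i j = chempot L N1 N2 chi A dt p1 p0 pm i j) ->
  Fenergy L N1 N2 chi p1 - Fenergy L N1 N2 chi p0
  <= ip L mu (fun i j => p1 i j - p0 i j)
     - chi * rho N1 N2 * ip L (fun i j => p1 i j - p0 i j) (fun i j => p1 i j - p0 i j)
     + 2 * chi * rho N1 N2 * ip L (fun i j => p0 i j - pm i j) (fun i j => p1 i j - p0 i j)
     - A * dt * dirichlet L (fun i j => p1 i j - p0 i j) (fun i j => p1 i j - p0 i j).
Proof.
move=> N1_gt0 N2_gt0 p1b p0b mass mu_def.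
set d := fun i j => p1 i j - p0 i j; set d' := fun i j => p0 i j - pm i j.
have bulk : gsum (fun i j => Sf N1 N2 (p1 i j) + Hf N1 N2 chi (p1 i j))
            - gsum (fun i j => Sf N1 N2 (p0 i j) + Hf N1 N2 chi (p0 i j))
  <= gsum (fun i j => (Sp N1 N2 (p1 i j) + Sp_offset N1 N2 + chi
                       + Hp N1 N2 chi (2 * p0 i j - pm i j)) * d i j
            - chi * rho N1 N2 * d i j ^+ 2 + 2 * chi * rho N1 N2 * d' i j * d i j).
  by rewrite -gsumB; apply: ler_gsum => i j; apply: bulk_energy_split_le.
have grad := gradient_energy_tangent_le
  (fun i j => lt_inv_rho1 N1_gt0 N2_gt0 (p1b i j)) (fun i j => lt_inv_rho1 N1_gt0 N2_gt0 (p0b i j)).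
have FE (p : G) : Fenergy L N1 N2 chi p
  = hh N L ^+ 2 * (gsum (fun i j => Sf N1 N2 (p i j) + Hf N1 N2 chi (p i j))
                   + gsum (fun i j => kap (p i j) * gradsq p i j)).
  by rewrite -gsumD.
rewrite !FE -mulrBr opprD addrACA -ip_neg_lap !ipE.
apply: le_trans (ler_wpM2l (sqr_ge0 _) (lerD bulk grad)) _; rewrite -gsumD.
have -> : forall h2 : R, h2 * gsum (fun i j => mu i j * d i j)
    - chi * rho N1 N2 * (h2 * gsum (fun i j => d i j * d i j))
    + 2 * chi * rho N1 N2 * (h2 * gsum (fun i j => d' i j * d i j))
    - A * dt * (h2 * gsum (fun i j => - lap L d i j * d i j))
  = h2 * gsum (fun i j => mu i j * d i j - chi * rho N1 N2 * (d i j * d i j)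
       + 2 * chi * rho N1 N2 * (d' i j * d i j) - A * dt * (- lap L d i j * d i j)).
  by move=> h2; rewrite !(gsumD, gsumB, gsumN, gsumZ); ring.
rewrite le_eqVlt; apply/orP; left; apply/eqP; congr (_ * _).
rewrite -[RHS]addr0 -[0](mulr0 (Sp_offset N1 N2 + chi)) -mass -gsumZ -gsumD.
by apply: eq_gsum => i j; rewrite mu_def /chempot /d /d'; ring.
Qed.

Lemma energy_step_le (N1 N2 chi A dt : R) (p1 p0 pm mu psi psi' : G) :
  (0 < N)%N -> 0 < N1 -> 0 < N2 -> 0 < chi -> chi ^+ 2 * rho N1 N2 ^+ 2 <= A -> 0 < dt ->
  (forall i j, 0 < p1 i j < (rho N1 N2)^-1) -> (forall i j, 0 < p0 i j < (rho N1 N2)^-1) ->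
  (forall i j, - lap L psi i j = p1 i j - p0 i j) ->
  (forall i j, - lap L psi' i j = p0 i j - pm i j) ->
  (forall i j, (3 * p1 i j - 4 * p0 i j + pm i j) / (2 * dt) = lap L mu i j) ->
  (forall i j, mu i j = chempot L N1 N2 chi A dt p1 p0 pm i j) ->
  Eh L N1 N2 chi dt p1 p0
  + dt * (1 - chi ^+ 2 * rho N1 N2 ^+ 2 / A)
    * normm1sq L (fun i j => (p1 i j - p0 i j) / dt)
  <= Eh L N1 N2 chi dt p0 pm.
Proof.
move=> N_gt0 N1_gt0 N2_gt0 chi_gt0 A_ge dt_gt0 p1b p0b psiE psi'E muE mu_def.
have mass : gsum (fun i j => p1 i j - p0 i j) = 0.
  by rewrite -(eq_gsum psiE) gsumN gsum_lap oppr0.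
have := free_energy_step_le N1_gt0 N2_gt0 p1b p0b mass mu_def.
rewrite /Eh (normm1sq_divr N_gt0 _ psiE).
rewrite (normm1sq_dirichlet N_gt0 psiE) (normm1sq_dirichlet N_gt0 psi'E).
set d := fun i j => p1 i j - p0 i j in psiE *.
set d' := fun i j => p0 i j - pm i j in psi'E *.
rewrite (ip_bdf2_potential (lt0r_neq0 dt_gt0) psiE psi'E muE) /norm2sq.
set r := rho N1 N2 in A_ge *.
have r0 := rho_gt0 N1_gt0 N2_gt0.
have r_gt0 : 0 < chi * r by rewrite mulr_gt0.
have A_gt0 : 0 < A by apply: lt_le_trans A_ge; rewrite mulr_gt0 ?exprn_gt0.
have young_psi : dt^-1 * (2 * dirichlet L psi' psi)
                 <= dt^-1 * (dirichlet L psi' psi' + dirichlet L psi psi).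
  apply: ler_wpM2l; first by rewrite invr_ge0 ltW.
  by have := dirichlet_young L psi' psi ltr01; rewrite invr1 !mul1r.
have young_d : chi * r * (2 * ip L d' d) <= chi * r * (ip L d' d' + ip L d d).
  apply: ler_wpM2l; first exact: ltW.
  by have := ip_young L d' d ltr01; rewrite invr1 !mul1r.
have stab : chi * r * (2 * ip L d d)
            <= A * dt * dirichlet L d d + chi ^+ 2 * r ^+ 2 / A / dt * dirichlet L psi psi.
  pose a := A * dt / (chi * r).
  have a_gt0 : 0 < a by rewrite /a divr_gt0 // mulr_gt0.
  have := ler_wpM2l (ltW r_gt0) (ip_young_neg_lap a_gt0 psiE).
  rewrite [chi * r * (_ + _)]mulrDr [chi * r * (a * _)]mulrA [chi * r * (a^-1 * _)]mulrA.
  have -> : chi * r * a = A * dt by rewrite /a; field; rewrite !gt_eqF.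
  suff -> : chi * r * a^-1 = chi ^+ 2 * r ^+ 2 / A / dt by [].
  by rewrite /a; field; rewrite !gt_eqF.
have W_ge0 := mulr_ge0 (ltW (mulr_gt0 A_gt0 dt_gt0)) (dirichlet_ge0 L d).
have X_ge0 : 0 <= chi ^+ 2 * r ^+ 2 / A / dt * dirichlet L psi psi.
  apply: mulr_ge0 (dirichlet_ge0 _ _).
  by apply: divr_ge0 (ltW dt_gt0); apply: divr_ge0 (ltW A_gt0); rewrite -exprMn sqr_ge0.
have -> : dt * (1 - chi ^+ 2 * r ^+ 2 / A) * (dirichlet L psi psi / dt ^+ 2)
  = (1 - chi ^+ 2 * r ^+ 2 / A) * (dt^-1 * dirichlet L psi psi).
  by field; rewrite !gt_eqF.
rewrite [(4 * dt)^-1]invfM [(2 * dt)^-1]invfM.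
lra.
Qed.

Lemma bdf2_increment_neg_lap (dt : R) (phi : nat -> G) : dt != 0 ->
  (forall i j, phi 1%N i j = phi 0%N i j) ->
  (forall k, (1 <= k)%N -> exists mu : G, forall i j,
     (3 * phi k.+1 i j - 4 * phi k i j + phi k.-1 i j) / (2 * dt) = lap L mu i j) ->
  forall m, exists psi : G, forall i j, - lap L psi i j = phi m.+1 i j - phi m i j.
Proof.
move=> dt_neq0 phi10 bdf2; elim=> [|m [psi psiE]].
  by exists (fun _ _ => 0) => i j; rewrite phi10 subrr /lap /dx /dy /Dx /Dy; ring.
have [mu muE] := bdf2 m.+1 isT.
exists (fun x y => 3^-1 * psi x y + (- (2 * dt / 3)) * mu x y) => i j.
by rewrite lap_lincomb -muE -[lap L psi i j]opprK psiE /=; field.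
Qed.

End EnergyEstimate.

Theorem theorem5p1 (R : realType) (N : nat) (L N1 N2 chi A dt : R)
  (phi : nat -> grid R N) :
  (0 < N)%N -> 0 < L -> 0 < N1 -> 0 < N2 -> 0 < chi ->
  chi ^+ 2 * rho N1 N2 ^+ 2 <= A -> 0 < dt ->
  (forall k i j, 0 < phi k i j /\ phi k i j < (rho N1 N2)^-1) ->
  (forall i j, phi 1%N i j = phi 0%N i j) ->
  (forall k, (1 <= k)%N -> exists mu : grid R N,
     (forall i j, (3 * phi k.+1 i j - 4 * phi k i j + phi k.-1 i j) / (2 * dt)
                  = lap L mu i j) /\
     (forall i j, mu i j
                  = chempot L N1 N2 chi A dt (phi k.+1) (phi k) (phi k.-1) i j)) ->
  forall n, (1 <= n)%N ->
    Eh L N1 N2 chi dt (phi n.+1) (phi n)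
    + dt * (1 - chi ^+ 2 * rho N1 N2 ^+ 2 / A)
      * normm1sq L (fun i j => (phi n.+1 i j - phi n i j) / dt)
    <= Eh L N1 N2 chi dt (phi n) (phi n.-1).
Proof.
move=> N_gt0 _ N1_gt0 N2_gt0 chi_gt0 A_ge dt_gt0 phi_b phi10 scheme [//|n] _.
have bounds k i j : 0 < phi k i j < (rho N1 N2)^-1 by case: (phi_b k i j) => -> ->.
have bdf2 k (k_ge1 : (1 <= k)%N) : exists mu : grid R N, forall i j,
    (3 * phi k.+1 i j - 4 * phi k i j + phi k.-1 i j) / (2 * dt) = lap L mu i j.
  by have [mu [muE _]] := scheme k k_ge1; exists mu.
have incr := bdf2_increment_neg_lap (lt0r_neq0 dt_gt0) phi10 bdf2.
have [[psi psiE] [psi' psi'E]] := (incr n.+1, incr n).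
have [mu [muE mu_def]] := scheme n.+1 isT.
exact: energy_step_le N_gt0 N1_gt0 N2_gt0 chi_gt0 A_ge dt_gt0 (bounds _) (bounds _)
  psiE psi'E muE mu_def.
Qed.
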